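(* Let $(G,\sigma)$ be a connection graph and $i\neq j$ vertices, and write the conductance matrix as $\mathcal{C}^\sigma(i,j)=\begin{bmatrix}\mathcal{C}^\sigma_{ii}&\mathcal{C}^\sigma_{ij}\\ \mathcal{C}^\sigma_{ji}&\mathcal{C}^\sigma_{jj}\end{bmatrix}$. Then $$\mathcal{C}^\sigma_{ii}=\deg(i)\big(I_{d\times d}-(1-\mathbb{P}^i[T^1_j<T^1_i])\,\Omega^1_{ii}(j)\big),\qquad \mathcal{C}^\sigma_{ji}=-\deg(j)\,\mathbb{P}^j[T^1_i<T^1_j]\,\Omega^1_{ji}(j),$$ and, using $c_{ij}=\deg(i)\mathbb{P}^i[T^1_j<T^1_i]=\deg(j)\mathbb{P}^j[T^1_i<T^1_j]$, $$\mathcal{C}^\sigma(i,j)=c_{ij}\begin{bmatrix}I&-I\\-I&I\end{bmatrix}+\begin{bmatrix}(\deg(i)-c_{ij})(I-\Omega^1_{ii}(j))& c_{ij}(I-\Omega^1_{ij}(i))\\ c_{ij}(I-\Omega^1_{ji}(j))&(\deg(j)-c_{ij})(I-\Omega^1_{jj}(i))\end{bmatrix},$$ where $I=I_{d\times d}$.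
   Context: A connection graph $(G,\sigma)$: finite connected weighted graph $G=(V,E,W)$, $V=\{1,\dots,n\}$, $w_{xy}>0$ iff $\{x,y\}\in E$, $\deg(x)=\sum_y w_{xy}$, and $\sigma$ mapping oriented edges to $\mathsf{O}(d)$ with $\sigma_{yx}=\sigma_{xy}^{\mathrm T}$. Connection Laplacian $\mathcal{L}$: $nd\times nd$ block matrix with blocks $\deg(x)I_d$ on the diagonal, $-w_{xy}\sigma_{xy}$ for $x\sim y$, $0$ otherwise. For a block matrix $M=\begin{bmatrix}A&B\\C&D\end{bmatrix}$, $M/D=A-BD^\dagger C$ ($\dagger$ = Moore–Penrose inverse). The conductance matrix $\mathcal{C}^\sigma(i,j)\in\mathbb{R}^{2d\times2d}$ is the Schur complement $\mathcal{L}/\mathcal{L}_{\{i,j\}^c,\{i,j\}^c}$, with blocks ordered $i$ then $j$. Classical effective resistance $r_{ij}=(e_i-e_j)^{\mathrm T}L^\dagger(e_i-e_j)$ where $L=D-W$ is the graph Laplacian, and $c_{ij}=1/r_{ij}$. $(X_t)$: simple random walk with transition probabilities $w_{xy}/\deg(x)$; $\mathbb{P}^x$ given $X_0=x$; $T^1_k=\inf\{t\ge1:X_t=k\}$. For $a,b,k\in V$, $\Omega^1_{ab}(k)=\mathbb{E}^a\big[\prod_{\ell=1}^{T^1_b}\sigma_{X_{\ell-1}X_\ell}\mid T^1_b<T^1_k\big]$ (ordered product). *)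

From HB Require Import structures.
From mathcomp Require Import all_boot all_order all_algebra.
From mathcomp Require Import classical_sets boolp reals topology normedtype sequences.
Set Implicit Arguments. Unset Strict Implicit. Unset Printing Implicit Defensive.
Import Order.TTheory GRing.Theory Num.Theory.
Import numFieldNormedType.Exports.
Local Open Scope ring_scope.

Section ConnGraph.
Variables (R : realType) (N d : nat).
Variables (w : 'M[R]_N) (sigma : 'I_N -> 'I_N -> 'M[R]_d).

Definition deg (x : 'I_N) : R := \sum_(y < N) w x y.

Definition conn_graph : Prop :=
  [/\ (forall x y, w x y = w y x) /\ (forall x y, 0 <= w x y),
      forall x, w x x = 0,
      forall x y, connect [rel a b | 0 < w a b] x y,
      forall x y, 0 < w x y -> sigma x y *m (sigma x y)^T = 1%:M
    & forall x y, 0 < w x y -> sigma y x = (sigma x y)^T].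

Definition Lblk (x y : 'I_N) : 'M[R]_d :=
  if x == y then deg x *: 1%:M else - (w x y *: sigma x y).

Definition penrose m n (A : 'M[R]_(m, n)) (X : 'M[R]_(n, m)) : Prop :=
  [/\ A *m X *m A = A, X *m A *m X = X,
      (A *m X)^T = A *m X & (X *m A)^T = X *m A].

Definition pinv m n (A : 'M[R]_(m, n)) : 'M[R]_(n, m) := xget 0 (penrose A).

Definition schur m k (A : 'M[R]_m) (B : 'M[R]_(m, k)) (C : 'M[R]_(k, m))
  (D : 'M[R]_k) : 'M[R]_m := A - B *m pinv D *m C.

(* ---------- conductance matrix C^sigma(i,j) = L / L_{{i,j}^c,{i,j}^c} ---------- *)
Section Conductance.
Variables (i j : 'I_N).
Definition compl : {set 'I_N} := [set x | (x != i) && (x != j)].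
Definition cv (a : 'I_#|compl|) : 'I_N := enum_val a.

Definition Lcc := \mxblock_(a < #|compl|, b < #|compl|) Lblk (cv a) (cv b).
Definition Lrow (x : 'I_N) := \mxrow_(b < #|compl|) Lblk x (cv b).
Definition Lcol (x : 'I_N) := \mxcol_(a < #|compl|) Lblk (cv a) x.

Definition conductance : 'M[R]_(d + d) :=
  schur (block_mx (Lblk i i) (Lblk i j) (Lblk j i) (Lblk j j))
        (col_mx (Lrow i) (Lrow j)) (row_mx (Lcol i) (Lcol j)) Lcc.
End Conductance.

Definition graphLap : 'M[R]_N :=
  \matrix_(x, y) ((if x == y then deg x else 0) - w x y).
Definition eff_res (i j : 'I_N) : R :=
  let e : 'cV[R]_N := delta_mx i 0 - delta_mx j 0 in (e^T *m pinv graphLap *m e) 0 0.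
Definition eff_cond (i j : 'I_N) : R := (eff_res i j)^-1.

Definition ptrans (x y : 'I_N) : R := w x y / deg x.

(* paths X_0 .. X_s (s >= 1 steps) realising {T^1_b = s < T^1_k} from a *)
Definition hit_path (a b k : 'I_N) (s : nat) (x : {ffun 'I_s.+1 -> 'I_N}) : bool :=
  [&& x ord0 == a, x ord_max == b &
      [forall t : 'I_s.+1, ((0 < t)%N && (t < s)%N) ==> ((x t != b) && (x t != k))]].

Definition path_prob s (x : {ffun 'I_s.+1 -> 'I_N}) : R :=
  \prod_(t < s) ptrans (x (widen_ord (leqnSn s) t)) (x (lift ord0 t)).

Definition path_sig s (x : {ffun 'I_s.+1 -> 'I_N}) : 'M[R]_d :=
  \big[(@mulmx R d d d)/1%:M]_(t < s) sigma (x (widen_ord (leqnSn s) t)) (x (lift ord0 t)).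

(* P^a[T^1_b = s, T^1_b < T^1_k] and E^a[prod sigma ; T^1_b = s < T^1_k] *)
Definition hitP_s a b k (s : nat) : R := \sum_(x : {ffun 'I_s.+1 -> 'I_N} | hit_path a b k x) path_prob x.
Definition hitE_s a b k (s : nat) : 'M[R]_d :=
  \sum_(x : {ffun 'I_s.+1 -> 'I_N} | hit_path a b k x) (path_prob x *: path_sig x).

(* P^a[T^1_b < T^1_k] = sum over s >= 1 *)
Definition hitP (a b k : 'I_N) : R := limn (fun n => \sum_(s < n) hitP_s a b k s.+1).
(* E^a[prod sigma ; T^1_b < T^1_k], entrywise series *)
Definition hitE (a b k : 'I_N) : 'M[R]_d :=
  \matrix_(p, q) limn (fun n => \sum_(s < n) hitE_s a b k s.+1 p q).

(* Omega^1_ab(k) = E^a[prod sigma | T^1_b < T^1_k]  (0 if the event is null) *)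
Definition Omega1 (a b k : 'I_N) : 'M[R]_d := (hitP a b k)^-1 *: hitE a b k.

End ConnGraph.

(* First-step analysis of the walk stopped on {i, j}.  The hitting series obey
   P^a[T_b < T_k] = p_ab + sum_(y not in {b,k}) p_ay P^y[T_b < T_k], and the same
   equation with every step weighted by sigma.  Hence the column of the blocks
   -E^y[prod sigma; T_x < T_x'] over interior vertices y solves L_cc Z = L_cx, for
   (x, x') = (i, j) or (j, i).  L_cc is invertible by a maximum principle applied
   to |V|^2 (each sigma is orthogonal), so pinv L_cc = L_cc^-1 and the Schur
   complement evaluates block by block to deg x ([x = x'] I - E^x[...]).  The same
   maximum principle gives P^a[T_i < T_j] + P^a[T_j < T_i] = 1.  Finally the
   equilibrium potential h satisfies L h = deg i P^i[T_j < T_i] (e_i - e_j), and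
   L L^+ L = L (with L^+ = (L + J)^-1 - J, J the averaging projector) turns this
   into r_ij = (deg i P^i[T_j < T_i])^-1. *)

From Pilot Require Import Defs.
From HB Require Import structures.
From mathcomp Require Import all_boot all_order all_algebra.
From mathcomp Require Import classical_sets boolp reals topology normedtype sequences.
From mathcomp Require Import ring lra.
Import Order.TTheory GRing.Theory Num.Theory.
Import numFieldNormedType.Exports.
Set Implicit Arguments. Unset Strict Implicit. Unset Printing Implicit Defensive.
Local Open Scope classical_set_scope.
Local Open Scope ring_scope.

Section FfunCons.
Variable T : finType.

Definition ffcons s (a : T) (x : {ffun 'I_s.+1 -> T}) : {ffun 'I_s.+2 -> T} :=
  [ffun t => if unlift ord0 t is Some t' then x t' else a].

Definition fftail s (x : {ffun 'I_s.+2 -> T}) : {ffun 'I_s.+1 -> T} :=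
  [ffun t => x (lift ord0 t)].

Lemma ffcons0 s a (x : {ffun 'I_s.+1 -> T}) : ffcons a x ord0 = a.
Proof. by rewrite ffunE unlift_none. Qed.

Lemma ffconsS s a (x : {ffun 'I_s.+1 -> T}) t : ffcons a x (lift ord0 t) = x t.
Proof. by rewrite ffunE liftK. Qed.

Lemma ffconsK s a : cancel (@ffcons s a) (@fftail s).
Proof. by move=> x; apply/ffunP => t; rewrite ffunE ffconsS. Qed.

Lemma fftailK s a (x : {ffun 'I_s.+2 -> T}) : x ord0 = a -> ffcons a (fftail x) = x.
Proof.
move=> x0; apply/ffunP => t; case: (unliftP ord0 t) => [t'|] ->.
  by rewrite ffconsS ffunE.
by rewrite ffcons0.
Qed.

Lemma big_ffcons (V : nmodType) s a (P : pred {ffun 'I_s.+2 -> T}) (F : _ -> V) :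
  (forall x, P x -> x ord0 = a) ->
  \sum_(x | P x) F x = \sum_(x | P (ffcons a x)) F (ffcons a x).
Proof.
move=> Pa; rewrite (reindex_onto (ffcons a) (@fftail s)) => [|x Px].
  by apply: eq_bigl => x; rewrite ffconsK eqxx andbT.
exact: fftailK (Pa _ Px).
Qed.

Lemma big_steps_ffcons (U : Type) (idx : U) (op : U -> U -> U) (F : T -> T -> U) s a
    (x : {ffun 'I_s.+1 -> T}) :
  \big[op/idx]_(t < s.+1) F (ffcons a x (widen_ord (leqnSn s.+1) t)) (ffcons a x (lift ord0 t))
  = op (F a (x ord0)) (\big[op/idx]_(t < s) F (x (widen_ord (leqnSn s) t)) (x (lift ord0 t))).
Proof.
rewrite big_ord_recl.
have -> : widen_ord (leqnSn s.+1) ord0 = ord0 :> 'I_s.+2 by apply: val_inj.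
rewrite ffcons0 ffconsS; congr op; apply: eq_bigr => t _.
have -> : widen_ord (leqnSn s.+1) (lift ord0 t) = lift ord0 (widen_ord (leqnSn s) t).
  exact: val_inj.
by rewrite !ffconsS.
Qed.

End FfunCons.

Lemma forall_ord_recl s (Q : pred 'I_s.+1) :
  [forall t, Q t] = Q ord0 && [forall t : 'I_s, Q (lift ord0 t)].
Proof.
apply/forallP/andP => [Q_all|[Q0 /forallP QS] t]; first by split=> //; apply/forallP.
by case: (unliftP ord0 t) => [t'|] ->.
Qed.

Section HittingPaths.
Variables (R : realType) (N d : nat) (w : 'M[R]_N) (sigma : 'I_N -> 'I_N -> 'M[R]_d).
Local Notation p := (ptrans w).

Lemma path_prob_ffcons s a (x : {ffun 'I_s.+1 -> 'I_N}) :
  path_prob w (ffcons a x) = p a (x ord0) * path_prob w x.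
Proof. exact: big_steps_ffcons. Qed.

Lemma path_sig_ffcons s a (x : {ffun 'I_s.+1 -> 'I_N}) :
  path_sig sigma (ffcons a x) = sigma a (x ord0) *m path_sig sigma x.
Proof. exact: big_steps_ffcons. Qed.

Lemma hit_path_start a b k s (x : {ffun 'I_s.+1 -> 'I_N}) : hit_path a b k x -> x ord0 = a.
Proof. by case/and3P => /eqP. Qed.

Lemma hit_path_ffcons1 a b k (x : {ffun 'I_1 -> 'I_N}) :
  hit_path a b k (ffcons a x) = (x ord0 == b).
Proof.
rewrite /hit_path ffcons0 eqxx /=.
have -> : ord_max = lift ord0 (ord0 : 'I_1) :> 'I_2 by apply: val_inj.
rewrite ffconsS; case: (x ord0 == b) => //=.
by apply/forallP => t; apply/implyP => /andP[] /[swap]; rewrite ltnS leqn0 => /eqP->.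
Qed.

Lemma hit_path_ffconsS s a b k (x : {ffun 'I_s.+2 -> 'I_N}) :
  hit_path a b k (ffcons a x) = [&& x ord0 != b, x ord0 != k & hit_path (x ord0) b k x].
Proof.
rewrite /hit_path ffcons0 eqxx /=.
have -> : ord_max = lift ord0 (ord_max : 'I_s.+2) :> 'I_s.+3 by apply: val_inj.
rewrite ffconsS eqxx /= forall_ord_recl /= [X in _ && X]forall_ord_recl /=.
rewrite !ffconsS [in RHS]forall_ord_recl /=.
under eq_forallb do rewrite !ffconsS.
by case: (x ord_max == b); case: (x ord0 != b); case: (x ord0 != k).
Qed.

Lemma big_hit_path1 (V : nmodType) a b k (F : 'I_N -> V) :
  \sum_(x : {ffun 'I_1 -> 'I_N} | hit_path a b k (ffcons a x)) F (x ord0) = F b.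
Proof.
under eq_bigl do rewrite hit_path_ffcons1.
rewrite (big_pred1 [ffun => b]) => [|x]; first by rewrite ffunE.
apply/eqP/eqP => [xb|->]; last by rewrite ffunE.
by apply/ffunP => t; rewrite ord1 ffunE.
Qed.

Lemma big_hit_pathS (V : nmodType) a b k s (F : 'I_N -> {ffun 'I_s.+2 -> 'I_N} -> V) :
  \sum_(x | hit_path a b k (ffcons a x)) F (x ord0) x =
  \sum_(y | (y != b) && (y != k)) \sum_(x | hit_path y b k x) F y x.
Proof.
under eq_bigl do rewrite hit_path_ffconsS.
rewrite (partition_big (fun x : {ffun 'I_s.+2 -> 'I_N} => x ord0)
                       (fun y => (y != b) && (y != k))); last by move=> x /and3P[-> ->].
apply: eq_bigr => y /andP[yb yk]; apply: eq_big => [x|x /andP[_ /eqP->]] //.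
apply/idP/idP => [/andP[/and3P[_ _ hx] /eqP x0]|hx]; first by rewrite -x0.
by rewrite (hit_path_start hx) yb yk hx eqxx.
Qed.

Lemma hitP_s1 a b k : hitP_s w a b k 1 = p a b.
Proof.
rewrite /hitP_s (@big_ffcons _ _ _ a); last by move=> x; apply: hit_path_start.
under eq_bigr do rewrite path_prob_ffcons /path_prob big_ord0 mulr1.
exact: (big_hit_path1 _ _ _ (p a)).
Qed.

Lemma hitP_sS a b k s :
  hitP_s w a b k s.+2 = \sum_(y | (y != b) && (y != k)) p a y * hitP_s w y b k s.+1.
Proof.
rewrite /hitP_s (@big_ffcons _ _ _ a); last by move=> x; apply: hit_path_start.
under eq_bigr do rewrite path_prob_ffcons.
rewrite (big_hit_pathS _ _ _ (fun y x => p a y * path_prob w x)).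
by apply: eq_bigr => y _; rewrite mulr_sumr.
Qed.

Lemma hitE_s1 a b k : hitE_s w sigma a b k 1 = p a b *: sigma a b.
Proof.
rewrite /hitE_s (@big_ffcons _ _ _ a); last by move=> x; apply: hit_path_start.
under eq_bigr do rewrite path_prob_ffcons path_sig_ffcons /path_prob /path_sig
  !big_ord0 mulr1 mulmx1.
exact: (big_hit_path1 _ _ _ (fun y => p a y *: sigma a y)).
Qed.

Lemma hitE_sS a b k s : hitE_s w sigma a b k s.+2 =
  \sum_(y | (y != b) && (y != k)) p a y *: (sigma a y *m hitE_s w sigma y b k s.+1).
Proof.
rewrite /hitE_s (@big_ffcons _ _ _ a); last by move=> x; apply: hit_path_start.
under eq_bigr do rewrite path_prob_ffcons path_sig_ffcons.
rewrite (big_hit_pathS _ _ _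
  (fun y x => (p a y * path_prob w x) *: (sigma a y *m path_sig sigma x))).
apply: eq_bigr => y _; rewrite mulmx_sumr scaler_sumr; apply: eq_bigr => x _.
by rewrite -scalerA scalemxAr.
Qed.

End HittingPaths.

Section MaximumPrinciple.
Variables (R : realFieldType) (T : finType) (P : T -> T -> R).
Hypothesis P_ge0 : forall x y, 0 <= P x y.
Hypothesis P_sum1 : forall x, \sum_y P x y = 1.

Lemma subharmonic_max_step (S : pred T) (f : T -> R) m a y :
    (forall b, S b -> f b <= f m) -> 0 < f m ->
    S a -> f a = f m -> f a <= \sum_(y | S y) P a y * f y ->
  0 < P a y -> S y && (f y == f m).
Proof.
move=> f_le_m fm_gt0 Sa fam f_sub Pay.
have mass_S : \sum_(y | S y) P a y = 1.
  apply/eqP; rewrite eq_le -[X in _ <= X](P_sum1 a) [X in _ <= X](bigID S) /= lerDl.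
  rewrite sumr_ge0 //= -(ler_pM2r fm_gt0) mul1r -[X in X <= _]fam.
  apply: (le_trans f_sub); rewrite mulr_suml ler_sum // => b Sb.
  by rewrite ler_wpM2l ?f_le_m.
have Sy : S y.
  apply/negPn/negP => nSy.
  have : \sum_(b | ~~ S b) P a b = 0.
    by apply: (@addrI _ 1); rewrite addr0 -[in RHS](P_sum1 a) [in RHS](bigID S) /= mass_S.
  move/eqP; rewrite psumr_eq0 // => /allP/(_ y (mem_index_enum _)).
  by rewrite nSy /= => /eqP Pay0; rewrite Pay0 ltxx in Pay.
have gap0 : \sum_(b | S b) P a b * (f m - f b) = 0.
  apply/eqP; rewrite eq_le sumr_ge0 => [|b Sb]; last by rewrite mulr_ge0 ?subr_ge0 ?f_le_m.
  under eq_bigr do rewrite mulrBr.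
  by rewrite sumrB -mulr_suml mass_S mul1r subr_le0 -fam f_sub.
move/eqP: gap0; rewrite psumr_eq0 => [|b Sb]; last by rewrite mulr_ge0 ?subr_ge0 ?f_le_m.
move=> /allP/(_ y (mem_index_enum _)).
by rewrite Sy mulf_eq0 subr_eq0 (gt_eqF Pay) /= eq_sym.
Qed.

Hypothesis P_connected : forall x y, connect [rel a b | 0 < P a b] x y.

Lemma maximum_principle (S : pred T) z (f : T -> R) :
    ~~ S z -> (forall a, S a -> 0 <= f a) ->
    (forall a, S a -> f a <= \sum_(y | S y) P a y * f y) ->
  forall a, S a -> f a = 0.
Proof.
move=> nSz f_ge0 f_sub.
suff f_le0 b : S b -> f b <= 0 by move=> a Sa; apply/eqP; rewrite eq_le f_le0 ?f_ge0.
move=> Sb; have [m Sm f_le_m] := arg_maxP f Sb.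
have [fm_le0|fm_gt0] := lerP (f m) 0; first exact: le_trans (f_le_m _ Sb) fm_le0.
have /connectP[q walk_q z_last] := P_connected m z.
suff : S (last m q) by rewrite -z_last (negbTE nSz).
elim: q m Sm f_le_m fm_gt0 walk_q {z_last} => [//|y q IHq] /= a Sa f_le_a fa_gt0.
case/andP=> /(subharmonic_max_step f_le_a fa_gt0 Sa erefl (f_sub a Sa))/andP[Sy /eqP fya].
move=> walk_q; apply: IHq Sy _ _ walk_q => [c Sc|]; rewrite fya //.
exact: f_le_a.
Qed.

End MaximumPrinciple.

Definition orthomx (R : pzRingType) n (M : 'M[R]_n) := M *m M^T == 1%:M.

Lemma orthomx1 (R : pzRingType) n : orthomx (1%:M : 'M[R]_n).
Proof. by rewrite /orthomx trmx1 mulmx1. Qed.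

Lemma orthomxM (R : comPzRingType) n (A B : 'M[R]_n) :
  orthomx A -> orthomx B -> orthomx (A *m B).
Proof.
move=> /eqP AAt /eqP BBt.
by rewrite /orthomx trmx_mul mulmxA -(mulmxA A) BBt mulmx1 AAt.
Qed.

Lemma orthomx_entry_le1 (R : realFieldType) n (M : 'M[R]_n) r q :
  orthomx M -> `|M r q| <= 1.
Proof.
move=> /eqP MMt; have : (M *m M^T) r r = 1 by rewrite MMt mxE eqxx.
rewrite mxE (bigD1 q) //= mxE => row_r.
have : M r q ^+ 2 <= 1.
  by rewrite -row_r expr2 lerDl sumr_ge0 // => t _; rewrite mxE -expr2 sqr_ge0.
by rewrite expr2 ler_norml => sq_le1; apply/andP; split; nra.
Qed.

Lemma pinv_unit (R : realType) n (A : 'M[R]_n) : A \in unitmx -> pinv A = invmx A.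
Proof.
move=> A_unit; have [AXA _ _ _] : penrose A (pinv A).
  by apply: xgetPex; exists (invmx A); rewrite /penrose mulmxV // mulVmx // !mul1mx trmx1.
have <- : invmx A *m (A *m pinv A *m A) *m invmx A = invmx A.
  by rewrite AXA mulVmx // mul1mx.
by rewrite !mulmxA mulVmx // mul1mx -!mulmxA mulmxV // mulmx1.
Qed.

Lemma limn_shift (R : realType) (u v : nat -> R) l :
  (forall n, u n.+1 = v n) -> v n @[n --> \oo] --> l -> limn u = l.
Proof.
move=> uSv v_l; apply: cvg_lim => //; rewrite -cvg_shiftS.
by rewrite (_ : (fun n => u n.+1) = v) //; apply: funext.
Qed.

Lemma cvg_sum (R : realType) (I : Type) (r : seq I) (P : pred I) (f : I -> nat -> R) l :
  (forall y, P y -> f y n @[n --> \oo] --> l y) ->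
  \sum_(y <- r | P y) f y n @[n --> \oo] --> \sum_(y <- r | P y) l y.
Proof. by move=> f_l; apply: cvg_big => //; exact: add_continuous. Qed.

Section RowDot.
Variables (R : realFieldType) (n : nat).
Implicit Types u v : 'rV[R]_n.

Definition dotr u v : R := (u *m v^T) 0 0.

Lemma dotrE u v : dotr u v = \sum_k u 0 k * v 0 k.
Proof. by rewrite /dotr mxE; apply: eq_bigr => k _; rewrite mxE. Qed.

Lemma dotr_ge0 u : 0 <= dotr u u.
Proof. by rewrite dotrE sumr_ge0 // => k _; rewrite -expr2 sqr_ge0. Qed.

Lemma dotr_eq0 u : (dotr u u == 0) = (u == 0).
Proof.
apply/idP/eqP => [|->]; last by rewrite dotrE big1 // => k _; rewrite mxE mul0r.
rewrite dotrE psumr_eq0 => [/allP u0|k _]; last by rewrite -expr2 sqr_ge0.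
apply/matrixP => a k; rewrite ord1 mxE.
by have /= := u0 k (mem_index_enum _); rewrite mulf_eq0 orbb => /eqP.
Qed.

Lemma dotr_le_mean u v : 2 * dotr u v <= dotr u u + dotr v v.
Proof.
have : 0 <= \sum_k (u 0 k - v 0 k) ^+ 2 by rewrite sumr_ge0 // => k _; exact: sqr_ge0.
have -> : \sum_k (u 0 k - v 0 k) ^+ 2 = dotr u u + dotr v v - 2 * dotr u v.
  by rewrite !dotrE mulr_sumr -big_split -sumrB /=; apply: eq_bigr => k _; ring.
by rewrite subr_ge0.
Qed.

Lemma dotr_orthomx u (s : 'M[R]_n) : orthomx s -> dotr (u *m s) (u *m s) = dotr u u.
Proof. by move=> /eqP ssT; rewrite /dotr trmx_mul mulmxA -(mulmxA u) ssT mulmx1. Qed.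

Lemma dotr_suml (I : finType) (P : pred I) (c : I -> R) (u : I -> 'rV[R]_n) v :
  dotr (\sum_(y | P y) c y *: u y) v = \sum_(y | P y) c y * dotr (u y) v.
Proof.
rewrite /dotr mulmx_suml summxE; apply: eq_bigr => y _.
by rewrite -scalemxAl mxE.
Qed.

End RowDot.

Section ConnectionGraph.
Variables (R : realType) (N d : nat) (w : 'M[R]_N) (sigma : 'I_N -> 'I_N -> 'M[R]_d).
Hypothesis Hg : conn_graph w sigma.
(* On a single vertex the degree vanishes and the walk is undefined. *)
Hypothesis N_gt1 : (1 < N)%N.

Local Notation deg := (deg w).
Local Notation p := (ptrans w).

Let w_sym x y : w x y = w y x. Proof. by case: Hg => -[]. Qed.
Let w_ge0 x y : 0 <= w x y. Proof. by case: Hg => -[]. Qed.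
Let w_diag x : w x x = 0. Proof. by case: Hg. Qed.
Let w_connect x y : connect [rel a b | 0 < w a b] x y. Proof. by case: Hg. Qed.
Let sigma_orth x y : 0 < w x y -> orthomx (sigma x y).
Proof. by case: Hg => _ _ _ orth _ /orth/eqP. Qed.

Lemma deg_gt0 x : 0 < deg x.
Proof.
have /card_gt0P[z] : (0 < #|predC1 x|)%N by rewrite cardC1 card_ord -subn1 subn_gt0.
rewrite inE => zx; have /connectP[[|y q] /=] := w_connect x z.
  by move=> _ zx'; rewrite zx' eqxx in zx.
case/andP=> wxy _ _; rewrite /Defs.deg (bigD1 y) //= ltr_pwDl // sumr_ge0 //.
Qed.

Lemma ptrans_ge0 x y : 0 <= p x y.
Proof. by rewrite /ptrans divr_ge0 ?w_ge0 ?ltW ?deg_gt0. Qed.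

Lemma ptrans_sum1 x : \sum_y p x y = 1.
Proof. by rewrite /ptrans -mulr_suml divff ?gt_eqF ?deg_gt0. Qed.

Lemma ptrans_gt0 x y : (0 < p x y) = (0 < w x y).
Proof. by rewrite /ptrans pmulr_lgt0 // invr_gt0 deg_gt0. Qed.

Lemma mul_deg_ptrans x y : deg x * p x y = w x y.
Proof. by rewrite /ptrans mulrC divfK ?gt_eqF ?deg_gt0. Qed.

Lemma ptrans_diag x : p x x = 0.
Proof. by rewrite /ptrans w_diag mul0r. Qed.

Lemma walk_maximum_principle (S : pred 'I_N) z (f : 'I_N -> R) :
    ~~ S z -> (forall a, S a -> 0 <= f a) ->
    (forall a, S a -> f a <= \sum_(y | S y) p a y * f y) ->
  forall a, S a -> f a = 0.
Proof.
apply: maximum_principle; [exact: ptrans_ge0 | exact: ptrans_sum1 |].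
by move=> x y; rewrite (eq_connect (e' := [rel a b | 0 < w a b])) // => a b /=; rewrite ptrans_gt0.
Qed.

Definition hitP_upto a b k n := \sum_(s < n) hitP_s w a b k s.+1.
Definition hitE_upto a b k n := \sum_(s < n) hitE_s w sigma a b k s.+1.

Lemma hitP_s_ge0 a b k s : 0 <= hitP_s w a b k s.
Proof. by rewrite sumr_ge0 // => x _; rewrite prodr_ge0 // => t _; exact: ptrans_ge0. Qed.

Lemma hitP_uptoS a b k n : hitP_upto a b k n.+1 =
  p a b + \sum_(y | (y != b) && (y != k)) p a y * hitP_upto y b k n.
Proof.
rewrite /hitP_upto big_ord_recl hitP_s1; congr (_ + _).
under eq_bigr do rewrite /= hitP_sS.
by rewrite exchange_big /=; apply: eq_bigr => y _; rewrite mulr_sumr.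
Qed.

Lemma hitE_uptoS a b k n : hitE_upto a b k n.+1 =
  p a b *: sigma a b + \sum_(y | (y != b) && (y != k)) p a y *: (sigma a y *m hitE_upto y b k n).
Proof.
rewrite /hitE_upto big_ord_recl hitE_s1; congr (_ + _).
under eq_bigr do rewrite /= hitE_sS.
by rewrite exchange_big /=; apply: eq_bigr => y _; rewrite mulmx_sumr scaler_sumr.
Qed.

Lemma hitP_upto_le1 b k n a : hitP_upto a b k n <= 1.
Proof.
elim: n a => [|n IHn] a; first by rewrite /hitP_upto big_ord0 ler01.
rewrite hitP_uptoS -(ptrans_sum1 a) [X in _ <= X](bigD1 b) //= lerD2l.
apply: (@le_trans _ _ (\sum_(y | (y != b) && (y != k)) p a y)).
  by rewrite ler_sum // => y _; rewrite ler_piMr ?ptrans_ge0.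
rewrite [X in _ <= X](bigID (fun y => y != k)) /= lerDl.
by rewrite sumr_ge0 // => y _; exact: ptrans_ge0.
Qed.

Lemma hitP_upto_nondecreasing a b k : nondecreasing_seq (hitP_upto a b k).
Proof.
apply/nondecreasing_seqP => n.
by rewrite /hitP_upto big_ord_recr /= lerDl hitP_s_ge0.
Qed.

Lemma cvg_hitP_upto a b k : cvgn (hitP_upto a b k).
Proof.
apply: nondecreasing_is_cvgn; first exact: hitP_upto_nondecreasing.
by exists 1 => _ [n _ <-]; exact: hitP_upto_le1.
Qed.

Lemma hitP_first_step a b k :
  hitP w a b k = p a b + \sum_(y | (y != b) && (y != k)) p a y * hitP w y b k.
Proof.
apply: (limn_shift (hitP_uptoS a b k)).
by apply: cvgD; [exact: cvg_cst | apply: cvg_sum => y _; apply: cvgMl_tmp; exact: cvg_hitP_upto].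
Qed.

Lemma path_sig_orth s (x : {ffun 'I_s.+1 -> 'I_N}) :
  path_prob w x != 0 -> orthomx (path_sig sigma x).
Proof.
rewrite prodf_seq_neq0 => /allP step_pos; apply: (big_ind (@orthomx _ _)).
- exact: orthomx1.
- exact: orthomxM.
move=> t _; apply: sigma_orth; rewrite -ptrans_gt0 lt_def ptrans_ge0 andbT.
exact: step_pos (mem_index_enum _).
Qed.

Lemma hitE_s_entry_le a b k s r q : `|hitE_s w sigma a b k s r q| <= hitP_s w a b k s.
Proof.
rewrite summxE (le_trans (ler_norm_sum _ _ _)) // ler_sum // => x _.
have px_ge0 : 0 <= path_prob w x by rewrite prodr_ge0 // => t _; exact: ptrans_ge0.
rewrite mxE normrM ger0_norm //.
have [->|px_neq0] := eqVneq (path_prob w x) 0; first by rewrite mul0r.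
by rewrite ler_piMr // orthomx_entry_le1 // path_sig_orth.
Qed.

Lemma cvg_hitE_upto_entry a b k r q : cvgn (fun n => hitE_upto a b k n r q).
Proof.
have -> : (fun n => hitE_upto a b k n r q) = series (fun s => hitE_s w sigma a b k s.+1 r q).
  by apply: funext => n; rewrite /series /= big_mkord summxE.
apply: normed_cvg; apply: (series_le_cvg (v_ := fun s => hitP_s w a b k s.+1)).
- by move=> n; exact: normr_ge0.
- by move=> n; exact: hitP_s_ge0.
- by move=> n; exact: hitE_s_entry_le.
have <- : hitP_upto a b k = series (fun s => hitP_s w a b k s.+1).
  by apply: funext => n; rewrite /series /= big_mkord.
exact: cvg_hitP_upto.
Qed.

Lemma hitE_entry a b k r q : hitE w sigma a b k r q = limn (fun n => hitE_upto a b k n r q).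
Proof. by rewrite mxE; under [in RHS]eq_fun do rewrite /hitE_upto summxE. Qed.

Lemma hitE_first_step a b k : hitE w sigma a b k =
  p a b *: sigma a b + \sum_(y | (y != b) && (y != k)) p a y *: (sigma a y *m hitE w sigma y b k).
Proof.
apply/matrixP => r q; rewrite hitE_entry !mxE summxE.
under [in RHS]eq_bigr do rewrite !mxE.
under [in RHS]eq_bigr do under eq_bigr do rewrite hitE_entry.
apply: (@limn_shift _ _ (fun n => p a b * sigma a b r q + \sum_(y | (y != b) && (y != k))
  p a y * \sum_t sigma a y r t * hitE_upto y b k n t q)) => [n|].
  by rewrite hitE_uptoS !mxE summxE; under eq_bigr do rewrite !mxE.
apply: cvgD; first exact: cvg_cst.
apply: cvg_sum => y _; apply: cvgMl_tmp; apply: cvg_sum => t _; apply: cvgMl_tmp.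
exact: cvg_hitE_upto_entry.
Qed.

Lemma hitE_eq0 a b k : hitP w a b k = 0 -> hitE w sigma a b k = 0.
Proof.
move=> hitP0; have hitP_s0 s : hitP_s w a b k s.+1 = 0.
  apply/eqP; rewrite eq_le hitP_s_ge0 andbT.
  have := nondecreasing_cvgn_le (@hitP_upto_nondecreasing a b k) (@cvg_hitP_upto a b k) s.+1.
  rewrite -/(hitP w a b k) hitP0 /hitP_upto big_ord_recr /=; apply: le_trans.
  by rewrite lerDr sumr_ge0 // => t _; exact: hitP_s_ge0.
apply/matrixP => r q; rewrite hitE_entry mxE.
rewrite (_ : (fun n => _) = fun=> 0) ?lim_cst //; apply: funext => n.
rewrite summxE big1 // => s _; apply/eqP; rewrite -normr_le0 -(hitP_s0 s).
exact: hitE_s_entry_le.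
Qed.

(* Omega1 divides by hitP, with 0^-1 = 0; on a null event hitE vanishes too. *)
Lemma scale_hitP_Omega1 a b k : hitP w a b k *: Omega1 w sigma a b k = hitE w sigma a b k.
Proof.
have [hitP0|hitP_neq0] := eqVneq (hitP w a b k) 0; first by rewrite hitP0 scale0r hitE_eq0.
by rewrite scalerA divff // scale1r.
Qed.

Local Notation L := (graphLap w).

Lemma graphLap_tr : L^T = L.
Proof.
apply/matrixP => x y; rewrite !mxE w_sym.
by have [->|/negbTE xy] := eqVneq x y; rewrite // eq_sym xy.
Qed.

Lemma graphLap_rowsum x : \sum_y L x y = 0.
Proof.
under eq_bigr do rewrite mxE.
rewrite sumrB -big_mkcond (big_pred1 x) ?subrr //= => y; exact: eq_sym.
Qed.

Lemma graphLap_colsum y : \sum_x L x y = 0.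
Proof.
by apply: etrans (graphLap_rowsum y); apply: eq_bigr => x _; rewrite -[in LHS]graphLap_tr mxE.
Qed.

Lemma graphLap_mulE (x : 'cV[R]_N) a :
  (L *m x) a 0 = deg a * (x a 0 - \sum_y p a y * x y 0).
Proof.
rewrite mxE; under eq_bigr do rewrite mxE mulrBl.
rewrite sumrB mulrBr mulr_sumr; congr (_ - _).
  by rewrite (bigD1 a) //= eqxx big1 ?addr0 // => y /negbTE; rewrite eq_sym => ->; rewrite mul0r.
by apply: eq_bigr => y _; rewrite mulrA mul_deg_ptrans.
Qed.

Lemma sum_graphLap_mul (x : 'cV[R]_N) : \sum_a (L *m x) a 0 = 0.
Proof.
under eq_bigr do rewrite mxE.
by rewrite exchange_big big1 //= => y _; rewrite -mulr_suml graphLap_colsum mul0r.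
Qed.

Lemma graphLap_ker_const (x : 'cV[R]_N) b : L *m x = 0 -> forall a, x a 0 = x b 0.
Proof.
move=> Lx0; have x_harmonic a : x a 0 - x b 0 = \sum_(y | y != b) p a y * (x y 0 - x b 0).
  have /esym/eqP := graphLap_mulE x a; rewrite Lx0 mxE mulf_eq0 gt_eqF ?deg_gt0 //=.
  rewrite subr_eq0 => /eqP ->.
  have -> : \sum_(y | y != b) p a y * (x y 0 - x b 0) = \sum_y p a y * (x y 0 - x b 0).
    by rewrite [RHS](bigD1 b) //= subrr mulr0 add0r.
  under [RHS]eq_bigr do rewrite mulrBr.
  by rewrite sumrB -mulr_suml ptrans_sum1 mul1r.
move=> a; apply/eqP; rewrite -subr_eq0; apply/eqP.
have [->|ab] := eqVneq a b; first by rewrite subrr.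
apply/normr0_eq0; apply: (@walk_maximum_principle (fun y => y != b) b (fun a => `|x a 0 - x b 0|)) => //.
- by rewrite /= eqxx.
move=> c _; rewrite x_harmonic (le_trans (ler_norm_sum _ _ _)) // ler_sum // => y _.
by rewrite normrM ger0_norm ?ptrans_ge0.
Qed.

Definition Jmean : 'M[R]_N := const_mx N%:R^-1.

Lemma natrN_neq0 : N%:R != 0 :> R.
Proof. by rewrite pnatr_eq0 -lt0n ltnW. Qed.

Lemma graphLap_Jmean : L *m Jmean = 0.
Proof.
apply/matrixP => x y; rewrite mxE [RHS]mxE; under eq_bigr do rewrite [Jmean _ _]mxE.
by rewrite -mulr_suml graphLap_rowsum mul0r.
Qed.

Lemma Jmean_graphLap : Jmean *m L = 0.
Proof.
apply/matrixP => x y; rewrite mxE [RHS]mxE; under eq_bigr do rewrite [Jmean _ _]mxE.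
by rewrite -mulr_sumr graphLap_colsum mulr0.
Qed.

Lemma Jmean_rowsum x : \sum_y Jmean x y = 1.
Proof.
under eq_bigr do rewrite mxE.
by rewrite sumr_const card_ord -(mulr_natr N%:R^-1) mulVf ?natrN_neq0.
Qed.

Lemma Jmean_idem : Jmean *m Jmean = Jmean.
Proof.
apply/matrixP => x y; rewrite mxE; under eq_bigr do rewrite [Jmean _ y]mxE.
by rewrite -mulr_suml Jmean_rowsum mul1r mxE.
Qed.

Lemma Jmean_tr : Jmean^T = Jmean.
Proof. by apply/matrixP => x y; rewrite !mxE. Qed.

Lemma Jmean_mulLJ : Jmean *m (L + Jmean) = Jmean.
Proof. by rewrite mulmxDr Jmean_graphLap Jmean_idem add0r. Qed.

Lemma mulLJ_Jmean : (L + Jmean) *m Jmean = Jmean.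
Proof. by rewrite mulmxDl graphLap_Jmean Jmean_idem add0r. Qed.

Lemma graphLap_Jmean_unit : L + Jmean \in unitmx.
Proof.
rewrite -row_free_unit; apply: inj_row_free => v vM0; pose x := v^T.
have Mx0 : (L + Jmean) *m x = 0.
  have M_tr : (L + Jmean)^T = L + Jmean by rewrite linearD /= graphLap_tr Jmean_tr.
  by rewrite -M_tr -trmx_mul vM0 trmx0.
have Jx0 : Jmean *m x = 0 by rewrite -Jmean_mulLJ -mulmxA Mx0 mulmx0.
have Lx0 : L *m x = 0 by move: Mx0; rewrite mulmxDl Jx0 addr0.
have x0 : x = 0.
  apply/matrixP => a b; rewrite ord1 [RHS]mxE.
  have := congr1 (fun M : 'cV_N => M a 0) Jx0; rewrite /= [LHS]mxE [RHS]mxE.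
  under eq_bigr do rewrite (graphLap_ker_const a Lx0).
  by rewrite -mulr_suml Jmean_rowsum mul1r.
by rewrite -[v]trmxK -/x x0 trmx0.
Qed.

Lemma penrose_graphLap : penrose L (invmx (L + Jmean) - Jmean).
Proof.
have unitM := graphLap_Jmean_unit.
have iMJ : invmx (L + Jmean) *m Jmean = Jmean by rewrite -[X in _ *m X]mulLJ_Jmean mulKmx.
have JiM : Jmean *m invmx (L + Jmean) = Jmean by rewrite -[X in X *m _]Jmean_mulLJ mulmxK.
have LE : L = (L + Jmean) - Jmean by rewrite addrK.
have LX : L *m (invmx (L + Jmean) - Jmean) = 1%:M - Jmean.
  by rewrite {1}LE mulmxBl !mulmxBr mulmxV // JiM mulLJ_Jmean Jmean_idem subrr subr0.
have XL : (invmx (L + Jmean) - Jmean) *m L = 1%:M - Jmean.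
  by rewrite {2}LE mulmxBr !mulmxBl mulVmx // iMJ Jmean_mulLJ Jmean_idem subrr subr0.
split.
- by rewrite LX mulmxBl mul1mx Jmean_graphLap subr0.
- by rewrite XL mulmxBl mul1mx mulmxBr JiM Jmean_idem subrr subr0.
- by rewrite LX linearB /= trmx1 Jmean_tr.
- by rewrite XL linearB /= trmx1 Jmean_tr.
Qed.

Lemma graphLap_pinv_graphLap : L *m pinv L *m L = L.
Proof.
have [] // : penrose L (pinv L).
by apply: xgetPex; exists (invmx (L + Jmean) - Jmean); exact: penrose_graphLap.
Qed.

Section Pair.
Variables i j : 'I_N.
Hypothesis Hij : i != j.

Local Notation interior y := ((y != i) && (y != j)).

Lemma ptrans_split a : p a i + p a j + \sum_(y | interior y) p a y = 1.
Proof. by rewrite -(ptrans_sum1 a) [RHS](bigD1 i) //= [in RHS](bigD1 j) 1?eq_sym //= addrA. Qed.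

Lemma hitP_first_step_swap a :
  hitP w a j i = p a j + \sum_(y | interior y) p a y * hitP w y j i.
Proof. by rewrite hitP_first_step; under eq_bigl do rewrite andbC. Qed.

Lemma hitP_add_swap a : hitP w a i j + hitP w a j i = 1.
Proof.
pose g a := 1 - hitP w a i j - hitP w a j i.
have g_harmonic b : g b = \sum_(y | interior y) p b y * g y.
  rewrite /g; under eq_bigr do rewrite !mulrBr mulr1.
  rewrite !sumrB hitP_first_step hitP_first_step_swap -{1}(ptrans_split b).
  lra.
have g0 b : interior b -> g b = 0.
  move=> int_b; apply/normr0_eq0.
  apply: (@walk_maximum_principle (fun y => interior y) i (fun a => `|g a|)) => //.
  - by rewrite eqxx.
  move=> c _; rewrite g_harmonic (le_trans (ler_norm_sum _ _ _)) // ler_sum // => y _.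
  by rewrite normrM ger0_norm ?ptrans_ge0.
suff : g a = 0 by rewrite /g; lra.
by rewrite g_harmonic big1 // => y int_y; rewrite g0 ?mulr0.
Qed.

(* At the poles h takes the boundary values 1 and 0, not the return probabilities
   hitP i i j and hitP j i j. *)
Definition eq_potential : 'cV[R]_N :=
  \col_a (if a == i then 1 else if a == j then 0 else hitP w a i j).
Definition dipole : 'cV[R]_N := delta_mx i 0 - delta_mx j 0.
Local Notation h := eq_potential.

Lemma dipoleE a : dipole a 0 = (a == i)%:R - (a == j)%:R.
Proof. by rewrite !mxE !eqxx !andbT. Qed.

Lemma eq_potential_i : h i 0 = 1. Proof. by rewrite mxE eqxx. Qed.
Lemma eq_potential_j : h j 0 = 0. Proof. by rewrite mxE eqxx eq_sym (negbTE Hij). Qed.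
Lemma eq_potential_interior a : interior a -> h a 0 = hitP w a i j.
Proof. by case/andP=> /negbTE ai /negbTE aj; rewrite mxE ai aj. Qed.

Lemma graphLap_eq_potentialE a : (L *m h) a 0 = deg a * (h a 0 - hitP w a i j).
Proof.
rewrite graphLap_mulE hitP_first_step (bigD1 i) //= (bigD1 j) 1?eq_sym //=.
rewrite eq_potential_i eq_potential_j mulr1 mulr0 add0r.
by congr (_ * (_ - (_ + _))); apply: eq_bigr => y /eq_potential_interior->.
Qed.

Lemma deg_hitP_sym : deg i * hitP w i j i = deg j * hitP w j i j.
Proof.
have := sum_graphLap_mul h; under eq_bigr do rewrite graphLap_eq_potentialE.
rewrite (bigD1 i) //= (bigD1 j) 1?eq_sym //= big1 => [|y /eq_potential_interior->]; last first.
  by rewrite subrr mulr0.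
rewrite eq_potential_i eq_potential_j -(hitP_add_swap i) addr0.
by move: (hitP w i i j) (hitP w i j i) (hitP w j i j) => x1 x2 x3; lra.
Qed.

Lemma graphLap_eq_potential : L *m h = (deg i * hitP w i j i) *: dipole.
Proof.
apply/matrixP => a b; rewrite ord1 graphLap_eq_potentialE [RHS]mxE dipoleE.
have [->|ai] := eqVneq a i.
  by rewrite eq_potential_i (negbTE Hij) -{1}(hitP_add_swap i) /=; ring.
have [->|aj] := eqVneq a j; first by rewrite eq_potential_j deg_hitP_sym /=; ring.
by rewrite eq_potential_interior ?ai ?aj //= subrr; ring.
Qed.

Lemma deg_hitP_neq0 : deg i * hitP w i j i != 0.
Proof.
apply/eqP => c0; have : L *m h = 0 by rewrite graphLap_eq_potential c0 scale0r.
move/(graphLap_ker_const i)/(_ j); rewrite eq_potential_i eq_potential_j.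
by move/eqP; rewrite eq_sym oner_eq0.
Qed.

Lemma eff_cond_hitP : eff_cond w i j = deg i * hitP w i j i.
Proof.
rewrite /eff_cond /eff_res -/dipole; set c := deg i * hitP w i j i.
have dipole_h : dipole = c^-1 *: (L *m h).
  by rewrite graphLap_eq_potential scalerA mulVf ?deg_hitP_neq0 // scale1r.
have h_dipole : (h^T *m dipole) 0 0 = 1.
  rewrite mxE (bigD1 i) //= (bigD1 j) 1?eq_sym //= big1 => [|y /andP[yi yj]]; last first.
    by rewrite dipoleE (negbTE yi) (negbTE yj) subrr mulr0.
  rewrite !dipoleE ![h^T _ _]mxE eq_potential_i eq_potential_j !eqxx (negbTE Hij).
  by rewrite eq_sym (negbTE Hij) /=; ring.
have -> : dipole^T *m pinv L *m dipole = c^-1 *: (h^T *m dipole).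
  rewrite [in LHS]dipole_h [(_ *: _)^T]linearZ /= trmx_mul graphLap_tr -scalemxAl -scalemxAl.
  rewrite -scalemxAr !mulmxA -(mulmxA (h^T *m L)) -(mulmxA h^T) (mulmxA L).
  rewrite graphLap_pinv_graphLap -mulmxA graphLap_eq_potential.
  by rewrite -scalemxAr scalerK ?deg_hitP_neq0.
by rewrite mxE h_dipole mulr1 invrK.
Qed.

Local Notation m := #|compl i j|.
Local Notation cv := (@cv N i j).
Local Notation Lb := (Lblk w sigma).

Lemma cv_interior a : interior (cv a).
Proof. by have := enum_valP a; rewrite inE. Qed.

Lemma big_cv (V : nmodType) (F : 'I_N -> V) :
  \sum_(a < m) F (cv a) = \sum_(y | interior y) F y.
Proof. by rewrite -big_enum_val; apply: eq_bigl => y; rewrite inE. Qed.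

Lemma cv_onto x : interior x -> exists b, cv b = x.
Proof.
move=> int_x; have x_in : x \in compl i j by rewrite inE.
by exists (enum_rank_in x_in x); rewrite /Defs.cv enum_rankK_in.
Qed.

Lemma LblkE x y : Lb x y = deg x *: ((x == y)%:R *: 1%:M - p x y *: sigma x y).
Proof.
rewrite /Lblk; have [->|_] := eqVneq x y; first by rewrite ptrans_diag scale0r subr0 scale1r.
by rewrite scale0r sub0r scalerN scalerA mul_deg_ptrans.
Qed.

Lemma sum_mul_Lblk (V : 'I_N -> 'rV[R]_d) x : interior x ->
  \sum_(y | interior y) V y *m Lb y x =
  deg x *: (V x - \sum_(y | interior y) p x y *: (V y *m sigma y x)).
Proof.
move=> int_x; under eq_bigr do rewrite LblkE -scalemxAr mulmxBr -!scalemxAr mulmx1 scalerBr.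
rewrite sumrB scalerBr scaler_sumr; congr (_ - _).
  rewrite (bigD1 x) //= eqxx scale1r big1 ?addr0 // => y /andP[_ /negbTE->].
  by rewrite scale0r scaler0.
by apply: eq_bigr => y _; rewrite !scalerA mul_deg_ptrans w_sym -mul_deg_ptrans.
Qed.

Lemma sum_Lblk_mul (F : 'I_N -> 'M[R]_d) u :
  \sum_(y | interior y) Lb u y *m F y =
  deg u *: ((interior u)%:R *: F u - \sum_(y | interior y) p u y *: (sigma u y *m F y)).
Proof.
under eq_bigr do rewrite LblkE -scalemxAl mulmxBl -!scalemxAl mul1mx scalerBr.
rewrite sumrB scalerBr scaler_sumr; congr (_ - _).
case int_u : (interior u).
  rewrite (bigD1 u) //= eqxx scale1r big1 ?addr0 // => y /andP[_ yu].
  by rewrite eq_sym (negbTE yu) scale0r scaler0.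
rewrite scale0r scaler0 big1 // => y int_y.
have /negbTE-> : u != y by apply/eqP => uy; rewrite uy int_y in int_u.
by rewrite scale0r scaler0.
Qed.

Lemma dotr_subharmonic (V : 'I_N -> 'rV[R]_d) x :
    V x = \sum_(y | interior y) p x y *: (V y *m sigma y x) ->
  dotr (V x) (V x) <= \sum_(y | interior y) p x y * dotr (V y) (V y).
Proof.
move=> Vx; set nx := dotr (V x) (V x).
have mass_le1 : \sum_(y | interior y) p x y <= 1.
  rewrite -(ptrans_sum1 x) [X in _ <= X](bigID (fun y => interior y)) /= lerDl.
  by rewrite sumr_ge0 // => y _; exact: ptrans_ge0.
have twice : 2 * nx <= \sum_(y | interior y) p x y * dotr (V y) (V y)
                       + (\sum_(y | interior y) p x y) * nx.
  rewrite {1}/nx {1}Vx dotr_suml mulr_sumr mulr_suml -big_split /= ler_sum // => y _.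
  have [->|pxy_neq0] := eqVneq (p x y) 0; first by rewrite !mul0r mulr0 addr0.
  have wyx : 0 < w y x by rewrite w_sym -ptrans_gt0 lt_def pxy_neq0 ptrans_ge0.
  rewrite mulrCA -mulrDr ler_wpM2l ?ptrans_ge0 //.
  by have := dotr_le_mean (V y *m sigma y x) (V x); rewrite dotr_orthomx ?sigma_orth.
have : (\sum_(y | interior y) p x y) * nx <= nx by rewrite ler_piMl ?dotr_ge0.
by lra.
Qed.

Lemma Lcc_unit : Lcc w sigma i j \in unitmx.
Proof.
rewrite -row_free_unit; apply: inj_row_free => v vL0.
pose V y := \sum_(a | cv a == y) submxrow v a.
have V_cv b : V (cv b) = submxrow v b.
  by rewrite /V (big_pred1 b) // => a; rewrite (inj_eq enum_val_inj).
have vL_col b : \sum_a submxrow v a *m Lb (cv a) (cv b) = 0.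
  have := congr1 (fun M => submxrow M b) vL0.
  by rewrite /= -{1}(submxrowK v) /Lcc mul_mxrow_mxblock mxrowK submxrow0.
have V_harmonic x : interior x -> V x = \sum_(y | interior y) p x y *: (V y *m sigma y x).
  move=> int_x; have [b <-] := cv_onto int_x.
  have := vL_col b; under eq_bigr do rewrite -V_cv.
  rewrite (big_cv (fun y => V y *m Lb y (cv b))) sum_mul_Lblk ?cv_interior //.
  by move/eqP; rewrite scaler_eq0 gt_eqF ?deg_gt0 //= subr_eq0 => /eqP.
have V0 x : interior x -> V x = 0.
  move=> int_x; apply/eqP; rewrite -dotr_eq0; apply/eqP.
  apply: (@walk_maximum_principle (fun y => interior y) i (fun y => dotr (V y) (V y))) => //.
  - by rewrite eqxx.
  - by move=> y _; exact: dotr_ge0.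
  by move=> y int_y; apply: dotr_subharmonic; exact: V_harmonic.
rewrite -(submxrowK v) -[RHS](mxrow0 (q_ := fun _ : 'I_m => d)).
by apply/eq_mxrowP => b; rewrite -V_cv V0 ?cv_interior.
Qed.

Section Endpoints.
Variables x x' : 'I_N.
Hypothesis xx' : (x, x') \in [:: (i, j); (j, i)].

Lemma interior_ends y : interior y = (y != x) && (y != x').
Proof. by move: xx'; rewrite !inE => /orP[] /eqP[-> ->] //; rewrite andbC. Qed.

Lemma hitE_first_step_ends a : hitE w sigma a x x' =
  p a x *: sigma a x + \sum_(y | interior y) p a y *: (sigma a y *m hitE w sigma y x x').
Proof. by rewrite hitE_first_step; under [in RHS]eq_bigl do rewrite interior_ends. Qed.

Definition hitE_col := \mxcol_(a < m) (- hitE w sigma (cv a) x x').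

Lemma pinv_Lcc_Lcol : pinv (Lcc w sigma i j) *m Lcol w sigma i j x = hitE_col.
Proof.
rewrite pinv_unit ?Lcc_unit //; apply: (canLR (mulKmx Lcc_unit)).
rewrite /Lcc /hitE_col /Lcol mul_mxblock_mxrow; apply/eq_mxcolP => b.
rewrite (big_cv (fun y => Lb (cv b) y *m - hitE w sigma y x x')).
under eq_bigr do rewrite mulmxN.
rewrite sumrN sum_Lblk_mul cv_interior scale1r hitE_first_step_ends addrK.
have /negbTE cx : cv b != x by have := cv_interior b; rewrite interior_ends => /andP[].
by rewrite /Lblk cx scalerA mul_deg_ptrans.
Qed.

Lemma conductance_entry y : ~~ interior y ->
  Lb y x - Lrow w sigma i j y *m hitE_col = deg y *: ((y == x)%:R *: 1%:M - hitE w sigma y x x').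
Proof.
move=> ext_y; rewrite /Lrow /hitE_col mul_mxrow_mxcol.
rewrite (big_cv (fun u => Lb y u *m - hitE w sigma u x x')).
under eq_bigr do rewrite mulmxN.
rewrite sumrN sum_Lblk_mul (negbTE ext_y) scale0r sub0r scalerN opprK.
have -> : \sum_(u | interior u) p y u *: (sigma y u *m hitE w sigma u x x') =
          hitE w sigma y x x' - p y x *: sigma y x.
  by rewrite (hitE_first_step_ends y) addrC addKr.
by rewrite LblkE -scalerBr opprB addrA subrK.
Qed.

End Endpoints.

Lemma conductanceE : conductance w sigma i j =
  block_mx (deg i *: (1%:M - hitE w sigma i i j)) (- (deg i *: hitE w sigma i j i))
           (- (deg j *: hitE w sigma j i j)) (deg j *: (1%:M - hitE w sigma j j i)).
Proof.
have ij : (i, j) \in [:: (i, j); (j, i)] by rewrite !inE eqxx.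
have ji : (j, i) \in [:: (i, j); (j, i)] by rewrite !inE eqxx orbT.
have ext_i : ~~ interior i by rewrite eqxx.
have ext_j : ~~ interior j by rewrite eqxx andbF.
rewrite /conductance /schur -mulmxA mul_mx_row (pinv_Lcc_Lcol ij) (pinv_Lcc_Lcol ji).
rewrite mul_col_row opp_block_mx add_block_mx !conductance_entry //.
by rewrite !eqxx (negbTE Hij) eq_sym (negbTE Hij) !scale1r scale0r !sub0r !scalerN.
Qed.

End Pair.

End ConnectionGraph.

Unset Implicit Arguments.

Theorem theorem5p9 (R : realType) (N d : nat) (w : 'M[R]_N)
  (sigma : 'I_N -> 'I_N -> 'M[R]_d) (i j : 'I_N) :
  conn_graph w sigma -> i != j ->
  let C := conductance w sigma i j in
  let c := eff_cond w i j in
  let I := (1%:M : 'M[R]_d) in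
  [/\ ulsubmx C = deg w i *: (I - (1 - hitP w i j i) *: Omega1 w sigma i i j),
      dlsubmx C = - ((deg w j * hitP w j i j) *: Omega1 w sigma j i j)
    & C = c *: block_mx I (- I) (- I) I
          + block_mx ((deg w i - c) *: (I - Omega1 w sigma i i j))
                     (c *: (I - Omega1 w sigma i j i))
                     (c *: (I - Omega1 w sigma j i j))
                     ((deg w j - c) *: (I - Omega1 w sigma j j i))].
Proof.
move=> Hg Hij C c I.
have N_gt1 : (1 < N)%N by have := max_card [set i; j]%SET; rewrite cards2 Hij card_ord.
have hitP_ii : hitP w i i j = 1 - hitP w i j i.
  by rewrite -(hitP_add_swap Hg N_gt1 Hij i) addrK.
have hitP_jj : hitP w j j i = 1 - hitP w j i j.
  by rewrite -(hitP_add_swap Hg N_gt1 Hij j) addrC addKr.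
have c_i : c = deg w i * hitP w i j i := eff_cond_hitP Hg N_gt1 Hij.
have c_j : c = deg w j * hitP w j i j by rewrite c_i (deg_hitP_sym Hg N_gt1 Hij).
rewrite /C (conductanceE Hg N_gt1 Hij) -!(scale_hitP_Omega1 Hg N_gt1) hitP_ii hitP_jj.
split; [by rewrite block_mxKul | by rewrite block_mxKdl scalerA |].
rewrite scale_block_mx add_block_mx; congr block_mx; apply/matrixP => r q; rewrite !mxE.
- by rewrite c_i; ring.
- by rewrite c_i; ring.
- by rewrite c_j; ring.
- by rewrite c_j; ring.
Qed.
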